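(* Assume (H3) and (H0)–(H2). Let $u\in USC(\mathbb T^N;\mathbb R^m)$ be a bounded viscosity subsolution of the stationary system (S). Then $u$ is Lipschitz continuous on $\mathbb T^N$ with a constant $L$ depending only on $H_1,\dots,H_m$, $D$ and $|u|_\infty$. If moreover $\sum_{j=1}^m d_{ij}(x)=0$ for all $x\in\mathbb T^N$ and all $i$, and $D(x)$ is irreducible for all $x\in\mathbb T^N$, then $L$ can be chosen independent of $|u|_\infty$ (depending only on $H_1,\dots,H_m$ and $D$).
   Context: $\mathbb T^N=\mathbb R^N/\mathbb Z^N$; $D(x)=(d_{ij}(x))_{1\le i,j\le m}$. (H3): each $d_{ij}$ continuous on $\mathbb T^N$, $d_{ii}\ge0$, $d_{ij}\le0$ for $i\ne j$, $\sum_j d_{ij}\ge0$. Irreducible: for every proper subset $\mathcal I\subsetneq\{1,\dots,m\}$ there exist $i\in\mathcal I$, $j\notin\mathcal I$ with $d_{ij}(x)\ne0$. $H_i(x,p)=F_i(x,p)-f_i(x)$ with (H0) $f_i,F_i$ continuous, $1$-periodic in $x$; (H1) $F_i(x,\cdot)$ convex, coercive ($\inf_xF_i(x,p)\to\infty$ as $|p|\to\infty$), $F_i(x,p)\ge F_i(x,0)=0$; (H2) $f_i\ge0$. System (S): $H_i(x,Du_i)+\sum_j d_{ij}(x)u_j=0$ in $\mathbb T^N$, $1\le i\le m$; viscosity subsolution: $u$ USC and whenever $\phi\in C^1$ and $u_i-\phi$ has a local max at $x$, $H_i(x,D\phi(x))+\sum_j d_{ij}(x)u_j(x)\le 0$.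 *)

From mathcomp Require Import all_boot.
From Stdlib Require Import Reals.
Set Implicit Arguments. Unset Strict Implicit. Unset Printing Implicit Defensive.
Local Open Scope R_scope.

Definition vec (N : nat) := 'I_N -> R.

Definition vsum (N : nat) (F : 'I_N -> R) : R := \big[Rplus/0]_(k < N) F k.

Definition dot (N : nat) (v w : vec N) : R := vsum (fun k => v k * w k).

Definition vnorm (N : nat) (v : vec N) : R := sqrt (dot v v).
Definition vsub (N : nat) (v w : vec N) : vec N := fun k => v k - w k.
Definition vdist (N : nat) (x y : vec N) : R := vnorm (vsub x y).

Definition vcomb (N : nat) (t : R) (p q : vec N) : vec N :=
  fun k => t * p k + (1 - t) * q k.

Definition shift (N : nat) (x : vec N) (k : 'I_N) : vec N :=
  fun j => if j == k then x j + 1 else x j.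

(* 1-periodic functions on R^N, i.e. functions on T^N = R^N / Z^N. *)
Definition periodic (N : nat) (g : vec N -> R) : Prop :=
  forall x k, g (shift x k) = g x.

Definition periodic_x (N : nat) (G : vec N -> vec N -> R) : Prop :=
  forall x k p, G (shift x k) p = G x p.

Definition continuous_on (N : nat) (g : vec N -> R) : Prop :=
  forall x eps, 0 < eps -> exists delta, 0 < delta /\
    forall y, vdist y x < delta -> Rabs (g y - g x) < eps.

Definition jointly_continuous (N : nat) (G : vec N -> vec N -> R) : Prop :=
  forall x p eps, 0 < eps -> exists delta, 0 < delta /\
    forall y q, vdist y x < delta -> vdist q p < delta ->
      Rabs (G y q - G x p) < eps.

Definition usc (N : nat) (g : vec N -> R) : Prop :=
  forall x eps, 0 < eps -> exists delta, 0 < delta /\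
    forall y, vdist y x < delta -> g y < g x + eps.

Definition is_C1 (N : nat) (phi : vec N -> R) (Dphi : vec N -> vec N) : Prop :=
  (forall x eps, 0 < eps -> exists delta, 0 < delta /\
     forall y, vdist y x < delta -> vdist (Dphi y) (Dphi x) < eps) /\
  (forall x eps, 0 < eps -> exists delta, 0 < delta /\
     forall y, vdist y x < delta ->
       Rabs (phi y - phi x - dot (Dphi x) (vsub y x)) <= eps * vdist y x).

Definition local_max (N : nat) (g : vec N -> R) (x : vec N) : Prop :=
  exists r, 0 < r /\ forall y, vdist y x < r -> g y <= g x.

Definition Ham (N m : nat) (F : 'I_m -> vec N -> vec N -> R)
  (f : 'I_m -> vec N -> R) (i : 'I_m) (x p : vec N) : R := F i x p - f i x.

(* Viscosity subsolution of (S):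
   H_i(x, Du_i) + sum_j d_ij(x) u_j = 0 in T^N.
   u is USC, 1-periodic, and for every C^1 test function phi such that
   u_i - phi has a local max at x, H_i(x, Dphi(x)) + sum_j d_ij(x) u_j(x) <= 0. *)
Definition visc_subsol (N m : nat) (F : 'I_m -> vec N -> vec N -> R)
  (f : 'I_m -> vec N -> R) (d : 'I_m -> 'I_m -> vec N -> R)
  (u : 'I_m -> vec N -> R) : Prop :=
  (forall i, usc (u i)) /\ (forall i, periodic (u i)) /\
  forall i phi Dphi x, is_C1 phi Dphi ->
    local_max (fun y => u i y - phi y) x ->
    Ham F f i x (Dphi x) + \big[Rplus/0]_(j < m) (d i j x * u j x) <= 0.

Definition H0 (N m : nat) (F : 'I_m -> vec N -> vec N -> R) (f : 'I_m -> vec N -> R) :=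
  forall i, continuous_on (f i) /\ periodic (f i) /\
            jointly_continuous (F i) /\ periodic_x (F i).

Definition H1 (N m : nat) (F : 'I_m -> vec N -> vec N -> R) :=
  forall i,
    (forall x p q t, 0 <= t <= 1 ->
       F i x (vcomb t p q) <= t * F i x p + (1 - t) * F i x q) /\
    (forall M, exists Rr, forall x p, Rr <= vnorm p -> M <= F i x p) /\
    (forall x p, F i x (fun _ => 0) <= F i x p) /\
    (forall x, F i x (fun _ => 0) = 0).

Definition H2 (N m : nat) (f : 'I_m -> vec N -> R) := forall i x, 0 <= f i x.

Definition H3 (N m : nat) (d : 'I_m -> 'I_m -> vec N -> R) :=
  (forall i j, continuous_on (d i j) /\ periodic (d i j)) /\
  (forall i x, 0 <= d i i x) /\
  (forall i j x, i != j -> d i j x <= 0) /\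
  (forall i x, 0 <= \big[Rplus/0]_(j < m) d i j x).

Definition irreducible_at (N m : nat) (d : 'I_m -> 'I_m -> vec N -> R) (x : vec N) :=
  forall I : {set 'I_m}, I != set0 -> I != setT ->
    exists i j, i \in I /\ j \notin I /\ d i j x <> 0.

(* u_i is L-Lipschitz on R^N (equivalently on T^N, u_i being periodic). *)
Definition lipschitz (N : nat) (L : R) (g : vec N -> R) :=
  forall x y, Rabs (g x - g y) <= L * vdist x y.

(* If u_i(y) - u_i(x) > L |y - x| for some y, the upper semicontinuous periodic function
   u_i - L |. - x| attains its maximum at some z <> x.  A paraboloid touching the cone
   L |. - x| from above at z is a smooth test function whose gradient at z has norm L, so
   the subsolution inequality F_i(z, p) <= f_i(z) - sum_j d_ij(z) u_j(z) contradicts the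
   coercivity of F_i as soon as L is large with respect to sup f_i and to a lower bound of
   the coupling term; in general that lower bound is - m |D|_oo |u|_oo.
   When D has zero row sums and is irreducible, u is first seen to be continuous, hence
   sum_j d_ij u_j <= f_i holds pointwise.  Starting from a maximal component, irreducibility
   then bounds every difference u_k - u_i by a constant depending on f and D only, and the
   coupling term, rewritten as sum_j d_ij (u_j - u_i), is bounded below independently of
   |u|_oo. *)

From Pilot Require Import Defs.
From HB Require Import structures.
From mathcomp Require Import all_boot.
From Stdlib Require Import Reals Lra Classical ClassicalEpsilon FunctionalExtensionality.
Set Implicit Arguments. Unset Strict Implicit. Unset Printing Implicit Defensive.
Local Open Scope R_scope.

(* The sums of Defs are taken with Stdlib's [Rplus]; making it a commutative
   monoid law gives access to the generic bigop lemmas. *)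
HB.instance Definition _ := Monoid.isComLaw.Build R 0 Rplus
  (fun a b c => esym (Rplus_assoc a b c)) Rplus_comm Rplus_0_l.

(** * Sums and Euclidean geometry *)

Section RealSums.
Variables (I : Type) (r : seq I) (P : pred I).

Lemma Rsum_le (F G : I -> R) : (forall i, P i -> F i <= G i) ->
  \big[Rplus/0]_(i <- r | P i) F i <= \big[Rplus/0]_(i <- r | P i) G i.
Proof. by move=> FG; apply: big_ind2 => // *; lra. Qed.

Lemma Rsum_ge0 (F : I -> R) : (forall i, P i -> 0 <= F i) ->
  0 <= \big[Rplus/0]_(i <- r | P i) F i.
Proof. by move=> F0; apply: big_ind => // *; lra. Qed.

Lemma Rsum_mult_l (c : R) (F : I -> R) :
  \big[Rplus/0]_(i <- r | P i) (c * F i) = c * \big[Rplus/0]_(i <- r | P i) F i.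
Proof. by apply: (big_ind2 (fun a b => a = c * b)) => [|? ? ? ? -> ->|]; rewrite //=; ring. Qed.

Lemma Rsum_opp (F : I -> R) :
  \big[Rplus/0]_(i <- r | P i) (- F i) = - \big[Rplus/0]_(i <- r | P i) F i.
Proof. by apply: (big_ind2 (fun a b => a = - b)) => [|? ? ? ? -> ->|]; rewrite //=; ring. Qed.

End RealSums.

Lemma Rabs_le_bounds x a : Rabs x <= a -> - a <= x <= a.
Proof. by have := Rle_abs x; have := Rle_abs (- x); rewrite Rabs_Ropp; lra. Qed.

Lemma mult_lt_of_lt_div A d eps : 0 <= A -> 0 <= d -> d < eps / (A + 1) -> A * d < eps.
Proof.
move=> A_ge0 d_ge0 d_small.
have := Rmult_lt_compat_l (A + 1) _ _ ltac:(lra) d_small.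
by rewrite (_ : (A + 1) * (eps / (A + 1)) = eps); [nra | field; lra].
Qed.

Lemma Rsum_ge_card (m : nat) (P : pred 'I_m) (F : 'I_m -> R) (b : R) :
  0 <= b -> (forall i, - b <= F i) -> - (INR m * b) <= \big[Rplus/0]_(i < m | P i) F i.
Proof.
move=> b0 Fb; rewrite big_mkcond /=.
have -> : INR m * b = \big[Rplus/0]_(i < m) b.
  rewrite big_const_ord; elim: m {P F Fb} => [|n IH]; first by rewrite /=; ring.
  by rewrite S_INR iterS -IH; ring.
rewrite -Rsum_opp; apply: Rsum_le => i _; case: (P i); [exact: Fb | lra].
Qed.

Section Euclid.
Variable N : nat.
Implicit Types (a b v w x y z : vec N).

Lemma dot_ge0 v : 0 <= dot v v.
Proof. by apply: Rsum_ge0 => k _; apply: Rle_0_sqr. Qed.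

Lemma vnorm_ge0 v : 0 <= vnorm v.
Proof. exact: sqrt_pos. Qed.

Lemma vdist_ge0 x y : 0 <= vdist x y.
Proof. exact: vnorm_ge0. Qed.

Lemma vnorm_sqr v : vnorm v * vnorm v = dot v v.
Proof. exact/sqrt_sqrt/dot_ge0. Qed.

Lemma coord_sqr_le_dot v k : v k * v k <= dot v v.
Proof.
rewrite /dot /vsum (bigD1 k) //=; set S := \big[Rplus/0]_(i < N | _) _.
have : 0 <= S by apply: Rsum_ge0 => i _; apply: Rle_0_sqr.
lra.
Qed.

Lemma Rabs_coord_le_vnorm v k : Rabs (v k) <= vnorm v.
Proof. by rewrite -sqrt_Rsqr_abs; apply/sqrt_le_1_alt/coord_sqr_le_dot. Qed.

Lemma Rabs_coord_le_vdist x y k : Rabs (x k - y k) <= vdist x y.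
Proof. exact: (Rabs_coord_le_vnorm (vsub x y) k). Qed.

Lemma vnorm_le_sum_Rabs v : vnorm v <= \big[Rplus/0]_(k < N) Rabs (v k).
Proof.
pose S := \big[Rplus/0]_(k < N) Rabs (v k).
have [S0 dotS] : 0 <= S /\ dot v v <= S * S.
  apply: (big_ind2 (fun (q s : R) => 0 <= s /\ q <= s * s)).
  - lra.
  - by move=> ? ? ? ? [? ?] [? ?]; split; nra.
  - move=> k _; split; first exact: Rabs_pos.
    by rewrite -Rabs_mult; apply: Req_le; rewrite Rabs_pos_eq //; apply: Rle_0_sqr.
by rewrite /vnorm -/S -(sqrt_square _ S0); apply: sqrt_le_1_alt.
Qed.

Lemma vnorm_scale c v : vnorm (fun k => c * v k) = Rabs c * vnorm v.
Proof.
rewrite /vnorm /dot /vsum.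
have -> : \big[Rplus/0]_(k < N) (c * v k * (c * v k))
    = \big[Rplus/0]_(k < N) (c * c * (v k * v k)) by apply: eq_bigr => k _; ring.
by rewrite Rsum_mult_l sqrt_mult_alt ?sqrt_Rsqr_abs //; apply: Rle_0_sqr.
Qed.

Lemma vdist_sym x y : vdist x y = vdist y x.
Proof.
rewrite /vdist -[vnorm (vsub y x)]Rmult_1_l -Rabs_R1 -Rabs_Ropp -vnorm_scale.
by congr vnorm; apply: functional_extensionality => k; rewrite /vsub; ring.
Qed.

Lemma Rabs_dot_le a b : Rabs (dot a b) <= vnorm a * vnorm b.
Proof.
suff : dot a b * dot a b <= dot a a * dot b b.
  move=> H; rewrite -sqrt_Rsqr_abs /vnorm -sqrt_mult_alt; [exact: sqrt_le_1_alt | exact: dot_ge0].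
have [b0|b_pos] := Req_dec (dot b b) 0.
  have bk0 k : b k = 0 by have := coord_sqr_le_dot b k; rewrite b0; nra.
  have -> : dot a b = 0 by rewrite /dot /vsum big1 // => k _; rewrite bk0; ring.
  by rewrite b0; lra.
(* expand |a + t b|^2 >= 0 at the minimising t = - <a,b> / |b|^2 *)
have b_gt0 : 0 < dot b b by have := dot_ge0 b; lra.
pose t := - dot a b / dot b b.
have : 0 <= dot (fun k => a k + t * b k) (fun k => a k + t * b k) by apply: dot_ge0.
have -> : dot (fun k => a k + t * b k) (fun k => a k + t * b k)
    = dot a a + 2 * t * dot a b + t * t * dot b b.
  rewrite /dot /vsum -!Rsum_mult_l -!big_split; apply: eq_bigr => k _ /=; ring.
rewrite /t => H; have := Rmult_le_pos _ _ H (Rlt_le _ _ b_gt0).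
have -> : (dot a a + 2 * (- dot a b / dot b b) * dot a b
    + - dot a b / dot b b * (- dot a b / dot b b) * dot b b) * dot b b
    = dot a a * dot b b - dot a b * dot a b by field; lra.
lra.
Qed.

Lemma vnorm_add_le a b : vnorm (fun k => a k + b k) <= vnorm a + vnorm b.
Proof.
have ab := Rle_trans _ _ _ (Rle_abs _) (Rabs_dot_le a b).
have na := vnorm_ge0 a; have nb := vnorm_ge0 b.
rewrite {1}/vnorm -(sqrt_square (vnorm a + vnorm b)); last lra.
apply: sqrt_le_1_alt.
have -> : dot (fun k => a k + b k) (fun k => a k + b k) = dot a a + 2 * dot a b + dot b b.
  rewrite /dot /vsum -!Rsum_mult_l -!big_split; apply: eq_bigr => k _ /=; ring.
rewrite -(vnorm_sqr a) -(vnorm_sqr b); nra.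
Qed.

Lemma vdist_triangle x y z : vdist x z <= vdist x y + vdist y z.
Proof.
have := vnorm_add_le (vsub x y) (vsub y z).
by rewrite (_ : (fun k => _) = vsub x z) //; apply: functional_extensionality => k;
  rewrite /vsub; ring.
Qed.

Lemma vdist_xx x : vdist x x = 0.
Proof. by rewrite /vdist /vnorm /dot /vsum /vsub big1 ?sqrt_0 // => k _; ring. Qed.

Lemma vdist_eq0 x y : vdist x y = 0 -> x = y.
Proof.
move=> xy0; apply: functional_extensionality => k.
by have := Rabs_coord_le_vdist x y k; rewrite xy0 => /Rabs_le_bounds; lra.
Qed.

End Euclid.

(** * Compactness of boxes by bisection *)

Lemma nested_intervals (A B : nat -> R) :
  (forall n, A n <= A n.+1) -> (forall n, B n.+1 <= B n) -> (forall n, A n <= B n) ->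
  exists z, forall n, A n <= z <= B n.
Proof.
move=> A_mono B_mono AB.
have A_le n p : A n <= A (n + p)%nat.
  by elim: p => [|p IH]; rewrite ?addn0 ?addnS; [lra | have := A_mono (n + p)%nat; lra].
have B_le n p : B (n + p)%nat <= B n.
  by elim: p => [|p IH]; rewrite ?addn0 ?addnS; [lra | have := B_mono (n + p)%nat; lra].
have AB' n n' : A n <= B n'.
  have := A_le n n'; have := B_le n' n; have := AB (n + n')%nat; rewrite (addnC n'); lra.
pose E r := exists n, r = A n.
have E_bd : bound E by exists (B 0%nat) => r [n ->]; apply: AB'.
have [z [z_ub z_lub]] := completeness E E_bd (ex_intro _ _ (ex_intro _ 0%nat erefl)).
exists z => n; split; first by apply: z_ub; exists n.
by apply: z_lub => r [n' ->]; apply: AB'.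
Qed.

Lemma INR_le_pow2 n : INR n <= 2 ^ n.
Proof.
elim: n => [|n IH]; first by rewrite /=; lra.
by rewrite S_INR /=; have := pow_R1_Rle 2 n; lra.
Qed.

Lemma pow2_inv_small (W delta : R) : 0 <= W -> 0 < delta -> exists n, W / 2 ^ n < delta.
Proof.
move=> W_ge0 delta_gt0.
have [n [n_small /lt_0_INR n_gt0]] :=
  archimed_cor1 (delta / (W + 1)) ltac:(apply: Rdiv_lt_0_compat; lra).
exists n.
have key : (W + 1) * / INR n < delta.
  have := Rmult_lt_compat_l (W + 1) _ _ ltac:(lra) n_small.
  by have -> : (W + 1) * (delta / (W + 1)) = delta by field; lra.
have := Rinv_le_contravar _ _ n_gt0 (INR_le_pow2 n).
have := Rinv_0_lt_compat _ n_gt0; rewrite /Rdiv; nra.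
Qed.

Section Bisection.
Variable N : nat.
Implicit Types (a b y z : vec N).

Definition in_box a b y := forall k, a k <= y k <= b k.

Definition set_coord (v : vec N) (k : 'I_N) (c : R) : vec N :=
  fun j => if j == k then c else v j.

Variable Q : R -> vec N -> Prop.
Hypothesis Q_mono : forall e e' y, e <= e' -> Q e y -> Q e' y.

(* [Q e y] reads: [y] has the property up to an error [e]. *)
Definition box_meets a b := forall e, 0 < e -> exists y, in_box a b y /\ Q e y.

Lemma box_meets_split a b k (c := (a k + b k) / 2) : box_meets a b ->
  box_meets a (set_coord b k c) \/ box_meets (set_coord a k c) b.
Proof.
move=> ab; apply: NNPP => /not_or_and [/not_all_ex_not [e1 no1] /not_all_ex_not [e2 no2]].
case: (imply_to_and _ _ no1) (imply_to_and _ _ no2) => e1_gt0 {}no1 [e2_gt0 {}no2].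
have [y [y_ab Qy]] := ab (Rmin e1 e2) (Rmin_pos _ _ e1_gt0 e2_gt0).
case: (Rle_lt_dec (y k) c) => yk.
- apply: no1; exists y; split; last exact: Q_mono (Rmin_l _ _) Qy.
  by move=> j; have := y_ab j; rewrite /set_coord; case: eqP => [->|_]; lra.
- apply: no2; exists y; split; last exact: Q_mono (Rmin_r _ _) Qy.
  by move=> j; have := y_ab j; rewrite /set_coord; case: eqP => [->|_]; lra.
Qed.

Definition halves a b a' b' :=
  forall k, a k <= a' k /\ b' k <= b k /\ b' k - a' k = (b k - a k) / 2.

Lemma box_meets_halve a b : (forall k, a k <= b k) -> box_meets a b ->
  exists a' b', box_meets a' b' /\ halves a b a' b'.
Proof.
move=> a_le_b ab.
suff [a' [b' [ab' H]]] : exists a' b', box_meets a' b' /\ forall k,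
    if k \in enum 'I_N then a k <= a' k /\ b' k <= b k /\ b' k - a' k = (b k - a k) / 2
    else a' k = a k /\ b' k = b k.
  by exists a', b'; split=> // k; have := H k; rewrite mem_enum.
elim: (enum 'I_N) (enum_uniq 'I_N) => [_|k s IH /andP [ks /IH [a' [b' [ab' H]]]]].
  by exists a, b.
have [a'k b'k] : a' k = a k /\ b' k = b k by have := H k; rewrite (negbTE ks).
have [half|half] := box_meets_split k ab'.
- exists a', (set_coord b' k ((a' k + b' k) / 2)); split=> // j.
  rewrite inE /set_coord; case: eqP => [->|_] /=; last exact: H.
  by rewrite a'k b'k; have := a_le_b k; lra.
- exists (set_coord a' k ((a' k + b' k) / 2)), b'; split=> // j.
  rewrite inE /set_coord; case: eqP => [->|_] /=; last exact: H.
  by rewrite a'k b'k; have := a_le_b k; lra.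
Qed.

Lemma box_meets_nested a b : (forall k, a k <= b k) -> box_meets a b ->
  exists A B : nat -> vec N, A 0%nat = a /\ B 0%nat = b /\ forall n,
    box_meets (A n) (B n) /\ halves (A n) (B n) (A n.+1) (B n.+1).
Proof.
move=> a_le_b ab.
pose good (p : vec N * vec N) := (forall k, p.1 k <= p.2 k) /\ box_meets p.1 p.2.
have step p : exists p', good p -> good p' /\ halves p.1 p.2 p'.1 p'.2.
  case: (classic (good p)) => [[le_p mp]|]; last by exists p.
  have [a' [b' [m' h']]] := box_meets_halve le_p mp.
  exists (a', b') => _; split; last exact: h'.
  by split=> // k /=; have [? [? ?]] := h' k; have := le_p k; lra.
pose next p := proj1_sig (constructive_indefinite_description _ (step p)).
have next_ok p : good p -> good (next p) /\ halves p.1 p.2 (next p).1 (next p).2.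
  exact: proj2_sig (constructive_indefinite_description _ (step p)).
pose boxes n := iter n next (a, b).
have ok n : good (boxes n) by elim: n => [|n IH]; [split | exact: (next_ok _ IH).1].
exists (fun n => (boxes n).1), (fun n => (boxes n).2); do 2!split=> //.
by move=> n; split; [exact: (ok n).2 | exact: (next_ok _ (ok n)).2].
Qed.

Lemma box_meets_cluster a b : (forall k, a k <= b k) -> box_meets a b ->
  exists z, in_box a b z /\ forall delta e, 0 < delta -> 0 < e ->
    exists y, vdist y z < delta /\ Q e y.
Proof.
move=> a_le_b ab.
have [A [B [A0 [B0 nest]]]] := box_meets_nested a_le_b ab.
have width n k : B n k - A n k = (b k - a k) / 2 ^ n.
  elim: n => [|n IH]; first by rewrite A0 B0 /=; field.
  have [_ [_ ->]] := (nest n).2 k; rewrite IH /=; field; apply: pow_nonzero; lra.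
have A_le_B n k : A n k <= B n k.
  have : 0 <= B n k - A n k; last lra.
  rewrite width; apply: Rmult_le_pos; first by have := a_le_b k; lra.
  by apply/Rlt_le/Rinv_0_lt_compat/pow_lt; lra.
have zk k : exists zk, forall n, A n k <= zk <= B n k.
  by apply: nested_intervals => n; have := (nest n).2 k; have := A_le_B n k; lra.
pose z k := proj1_sig (constructive_indefinite_description _ (zk k)).
have z_in n k : A n k <= z k <= B n k.
  exact: (proj2_sig (constructive_indefinite_description _ (zk k)) n).
exists z; split; first by move=> k; rewrite -A0 -B0; apply: z_in.
move=> delta e delta_gt0 e_gt0.
pose W := \big[Rplus/0]_(k < N) (b k - a k).
have [n W_small] : exists n, W / 2 ^ n < delta.
  by apply: pow2_inv_small => //; apply: Rsum_ge0 => k _; have := a_le_b k; lra.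
have [y [y_in Qy]] := (nest n).1 e e_gt0.
exists y; split=> //.
apply: Rle_lt_trans (vnorm_le_sum_Rabs _) (Rle_lt_trans _ _ _ _ W_small).
have -> : W / 2 ^ n = \big[Rplus/0]_(k < N) (B n k - A n k).
  rewrite /W /Rdiv Rmult_comm -Rsum_mult_l; apply: eq_bigr => k _; rewrite width /Rdiv; ring.
apply: Rsum_le => k _; rewrite /vsub; apply: Rabs_le; have := y_in k; have := z_in n k; lra.
Qed.

End Bisection.

(** * Continuity, periodicity and maxima *)

Section Continuity.
Variable N : nat.
Implicit Types (g h : vec N -> R) (x y z : vec N).

Lemma continuous_on_const c : continuous_on (fun _ : vec N => c).
Proof. by move=> x eps eps_gt0; exists 1; split=> [|y _]; rewrite ?Rminus_diag ?Rabs_R0; lra. Qed.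

Lemma continuous_on_add g h :
  continuous_on g -> continuous_on h -> continuous_on (fun y => g y + h y).
Proof.
move=> g_cont h_cont x eps eps_gt0.
have [d1 [d1_gt0 g_near]] := g_cont x (eps / 2) ltac:(lra).
have [d2 [d2_gt0 h_near]] := h_cont x (eps / 2) ltac:(lra).
exists (Rmin d1 d2); split=> [|y xy]; first exact: Rmin_pos.
have := g_near y (Rlt_le_trans _ _ _ xy (Rmin_l _ _)).
have := h_near y (Rlt_le_trans _ _ _ xy (Rmin_r _ _)).
have := Rabs_triang (g y - g x) (h y - h x).
by rewrite (_ : g y + h y - (g x + h x) = g y - g x + (h y - h x)); [lra | ring].
Qed.

Lemma continuous_on_opp g : continuous_on g -> continuous_on (fun y => - g y).
Proof.
move=> g_cont x eps /(g_cont x) [delta [delta_gt0 g_near]]; exists delta; split=> // y xy.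
by rewrite (_ : - g y - - g x = - (g y - g x)) ?Rabs_Ropp; [exact: g_near | ring].
Qed.

Lemma continuous_on_mult g h :
  continuous_on g -> continuous_on h -> continuous_on (fun y => g y * h y).
Proof.
move=> g_cont h_cont x eps eps_gt0.
have gx := Rabs_pos (g x); have hx := Rabs_pos (h x).
pose S := Rabs (g x) + Rabs (h x) + 1.
pose e := Rmin 1 (eps / S).
have e_gt0 : 0 < e by apply: Rmin_pos; [lra | apply: Rdiv_lt_0_compat; rewrite /S; lra].
have e_small : e * S <= eps.
  have := Rmult_le_compat_r S _ _ ltac:(rewrite /S; lra) (Rmin_r 1 (eps / S)).
  by rewrite /Rdiv Rmult_assoc Rinv_l ?Rmult_1_r // /S; lra.
have e_le1 : e <= 1 by apply: Rmin_l.
have [d1 [d1_gt0 g_near]] := g_cont x e e_gt0.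
have [d2 [d2_gt0 h_near]] := h_cont x e e_gt0.
exists (Rmin d1 d2); split=> [|y xy]; first exact: Rmin_pos.
have dg := g_near y (Rlt_le_trans _ _ _ xy (Rmin_l _ _)).
have dh := h_near y (Rlt_le_trans _ _ _ xy (Rmin_r _ _)).
have -> : g y * h y - g x * h x
    = (g y - g x) * (h y - h x) + g x * (h y - h x) + h x * (g y - g x) by ring.
have := Rabs_triang ((g y - g x) * (h y - h x) + g x * (h y - h x)) (h x * (g y - g x)).
have := Rabs_triang ((g y - g x) * (h y - h x)) (g x * (h y - h x)).
rewrite !Rabs_mult.
have := Rmult_le_compat_r _ _ _ (Rabs_pos (h y - h x)) (Rlt_le _ _ (Rlt_le_trans _ _ _ dg e_le1)).
have := Rmult_le_compat_l _ _ _ gx (Rlt_le _ _ dh).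
have := Rmult_le_compat_l _ _ _ hx (Rlt_le _ _ dg).
rewrite /S in e_small; lra.
Qed.

Lemma continuous_on_sum (I : Type) (r : seq I) (G : I -> vec N -> R) :
  (forall i, continuous_on (G i)) ->
  continuous_on (fun y => \big[Rplus/0]_(i <- r) G i y).
Proof.
move=> G_cont; elim: r => [|i r IH].
  have -> : (fun y => \big[Rplus/0]_(i <- [::]) G i y) = (fun _ => 0).
    by apply: functional_extensionality => y; rewrite big_nil.
  exact: continuous_on_const.
have -> : (fun y => \big[Rplus/0]_(j <- i :: r) G j y)
    = (fun y => G i y + \big[Rplus/0]_(j <- r) G j y).
  by apply: functional_extensionality => y; rewrite big_cons.
exact: continuous_on_add.
Qed.

Lemma lipschitz_continuous L g : lipschitz L g -> continuous_on g.
Proof.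
move=> g_lip x eps eps_gt0; have L_abs := Rabs_pos L.
exists (eps / (Rabs L + 1)); split=> [|y xy]; first by apply: Rdiv_lt_0_compat; lra.
apply: Rle_lt_trans (g_lip y x) (Rle_lt_trans _ _ _ _ (mult_lt_of_lt_div L_abs (vdist_ge0 y x) xy)).
exact: Rmult_le_compat_r (vdist_ge0 y x) (Rle_abs L).
Qed.

Lemma vdist_lipschitz x : lipschitz 1 (fun y => vdist y x).
Proof.
move=> y z; rewrite Rmult_1_l; apply: Rabs_le.
have := vdist_triangle y z x; have := vdist_triangle z y x; rewrite (vdist_sym z y); lra.
Qed.

Lemma usc_sub_continuous g h : usc g -> continuous_on h -> usc (fun y => g y - h y).
Proof.
move=> g_usc h_cont x eps eps_gt0.
have [d1 [d1_gt0 g_near]] := g_usc x (eps / 2) ltac:(lra).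
have [d2 [d2_gt0 h_near]] := h_cont x (eps / 2) ltac:(lra).
exists (Rmin d1 d2); split=> [|y xy]; first exact: Rmin_pos.
have := g_near y (Rlt_le_trans _ _ _ xy (Rmin_l _ _)).
have := h_near y (Rlt_le_trans _ _ _ xy (Rmin_r _ _)).
have := Rle_abs (h x - h y); rewrite Rabs_minus_sym; lra.
Qed.

End Continuity.

Section Torus.
Variable N : nat.
Implicit Types (g : vec N -> R) (x y : vec N).

Definition translate x k c : vec N := fun j => if j == k then x j + c else x j.

Lemma shift_translate x k c : shift (translate x k c) k = translate x k (c + 1).
Proof.
by apply: functional_extensionality => j; rewrite /shift /translate; case: eqP => // _; ring.
Qed.

Lemma periodic_translate_int g : periodic g ->
  forall x k (n : Z), g (translate x k (IZR n)) = g x.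
Proof.
move=> g_per x k; elim/Z.peano_ind => [|n IH|n IH].
- by congr g; apply: functional_extensionality => j; rewrite /translate; case: eqP => // _; ring.
- by rewrite succ_IZR -shift_translate g_per.
- by rewrite -IH -{2}(Z.succ_pred n) succ_IZR -shift_translate g_per.
Qed.

Lemma periodic_translate_vec g : periodic g ->
  forall x (n : 'I_N -> Z), g (fun j => x j + IZR (n j)) = g x.
Proof.
move=> g_per x n.
suff : forall s, uniq s -> g (fun j => if j \in s then x j + IZR (n j) else x j) = g x.
  move=> /(_ _ (enum_uniq 'I_N)); congr (g _ = _).
  by apply: functional_extensionality => j; rewrite mem_enum.
elim=> [_|k s IH /andP [ks /IH <-]]; first by congr g.
rewrite -[X in _ = X](periodic_translate_int g_per _ k (n k)); congr g.
apply: functional_extensionality => j; rewrite /translate inE.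
by case: eqP => [->|] //=; rewrite (negbTE ks).
Qed.

(* A representative of [y] modulo [Z^N]: [up r] is the least integer above [r],
   so every coordinate lands in (0, 1]. *)
Definition unit_rep y : vec N := fun k => y k + IZR (1 - up (y k)).

Lemma unit_rep_in_box y : in_box (fun _ => 0) (fun _ => 1) (unit_rep y).
Proof. by move=> k; rewrite /unit_rep minus_IZR; have [] := archimed (y k); lra. Qed.

Lemma periodic_unit_rep g y : periodic g -> g (unit_rep y) = g y.
Proof. by move=> g_per; apply: periodic_translate_vec. Qed.

Lemma unit_box_le : forall k : 'I_N, (fun _ => 0) k <= (fun _ => 1) k.
Proof. by move=> k /=; lra. Qed.

Lemma continuous_periodic_bounded g : continuous_on g -> periodic g ->
  exists B, forall y, Rabs (g y) <= B.
Proof.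
move=> g_cont g_per; apply: NNPP => unbounded.
pose Q e y := 1 < e * Rabs (g y).
have Q_mono e e' y : e <= e' -> Q e y -> Q e' y.
  by rewrite /Q => ? ?; have := Rabs_pos (g y); nra.
have meets : box_meets Q (fun _ => 0) (fun _ => 1).
  move=> e e_gt0; apply: NNPP => none; apply: unbounded; exists (/ e) => y.
  rewrite -(periodic_unit_rep y g_per); apply: Rnot_lt_le => big.
  apply: none; exists (unit_rep y); split; first exact: unit_rep_in_box.
  by have := Rmult_lt_compat_l e _ _ e_gt0 big; rewrite /Q Rinv_r; lra.
have [z [_ near_z]] := box_meets_cluster Q_mono unit_box_le meets.
have [delta [delta_gt0 g_near]] := g_cont z 1 Rlt_0_1.
have gz := Rabs_pos (g z).
have [y [yz Qy]] := near_z delta (/ (Rabs (g z) + 1)) delta_gt0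
  ltac:(apply: Rinv_0_lt_compat; lra).
have := g_near y yz; have := Rabs_triang_inv (g y) (g z) => ? ?.
have gy : Rabs (g y) < Rabs (g z) + 1 by lra.
have := Rmult_lt_compat_l _ _ _ (Rinv_0_lt_compat (Rabs (g z) + 1) ltac:(lra)) gy.
by rewrite Rinv_l /Q in Qy *; lra.
Qed.
End Torus.

Lemma finite_sup_bound (T : finType) (P : T -> R -> Prop) :
  (forall t B B', B <= B' -> P t B -> P t B') -> (forall t, exists B, P t B) ->
  exists B, forall t, P t B.
Proof.
move=> P_mono P_ex.
suff [B PB] : exists B, forall t, t \in enum T -> P t B.
  by exists B => t; apply: PB; rewrite mem_enum.
elim: (enum T) => [|t s [B PB]]; first by exists 0.
have [Bt PBt] := P_ex t; exists (Rmax Bt B) => t'; rewrite inE => /orP [/eqP ->|t's].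
  exact: P_mono (Rmax_l _ _) PBt.
exact: P_mono (Rmax_r _ _) (PB _ t's).
Qed.

Lemma finite_inf_bound (T : finType) (P : T -> R -> Prop) :
  (forall t e e', 0 < e' <= e -> P t e -> P t e') -> (forall t, exists e, 0 < e /\ P t e) ->
  exists e, 0 < e /\ forall t, P t e.
Proof.
move=> P_mono P_ex.
have P'_mono t B B' : B <= B' -> 0 < B /\ P t (/ B) -> 0 < B' /\ P t (/ B').
  move=> BB' [B_gt0 PtB]; split; first lra.
  apply: P_mono PtB; split; [apply: Rinv_0_lt_compat; lra | exact: Rinv_le_contravar].
have [B PB] : exists B, forall t, 0 < B /\ P t (/ B).
  apply: finite_sup_bound => // t; have [e [e_gt0 Pte]] := P_ex t.
  by exists (/ e); rewrite Rinv_inv; split=> //; apply: Rinv_0_lt_compat.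
exists (/ Rmax 1 B); split; first by apply: Rinv_0_lt_compat; have := Rmax_l 1 B; lra.
by move=> t; case: (P'_mono t B (Rmax 1 B) (Rmax_r _ _) (PB t)).
Qed.

Definition irreducible_gap (m : nat) (delta : R) (D : 'I_m -> 'I_m -> R) :=
  forall I : {set 'I_m}, I != set0 -> I != setT ->
    exists i j, i \in I /\ j \notin I /\ delta <= Rabs (D i j).

Lemma uniform_irreducible (N m : nat) (d : 'I_m -> 'I_m -> vec N -> R) :
  (forall i j, continuous_on (d i j) /\ periodic (d i j)) -> (forall x, irreducible_at d x) ->
  exists delta, 0 < delta /\ forall x, irreducible_gap delta (fun i j => d i j x).
Proof.
move=> d_cp d_irr.
pose P (I : {set 'I_m}) delta := forall x, I != set0 -> I != setT ->
  exists i j, i \in I /\ j \notin I /\ delta <= Rabs (d i j x).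
suff [delta [delta_gt0 Pdelta]] : exists delta, 0 < delta /\ forall I, P I delta.
  by exists delta; split=> // x I; apply: Pdelta.
apply: finite_inf_bound => [I e e' e'e PIe x I0 IT|I].
  by have [i [j [iI [jI dij]]]] := PIe x I0 IT; exists i, j; do 2!split=> //; lra.
case: (boolP ((I != set0) && (I != setT))) => [/andP [I0 IT]|proper]; last first.
  by exists 1; split=> [|x I0 IT]; [lra | by rewrite I0 IT in proper].
apply: NNPP => no_gap.
pose Q e y := forall i j, i \in I -> j \notin I -> Rabs (d i j y) < e.
have Q_mono e e' y : e <= e' -> Q e y -> Q e' y.
  by move=> ee' Qy i j iI jI; have := Qy i j iI jI; lra.
have meets : box_meets Q (fun _ => 0) (fun _ => 1).
  move=> e e_gt0; apply: NNPP => none; apply: no_gap; exists e; split=> // x _ _.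
  apply: NNPP => no_pair; apply: none; exists (unit_rep x); split; first exact: unit_rep_in_box.
  move=> i j iI jI; rewrite periodic_unit_rep; last exact: (d_cp i j).2.
  by apply: Rnot_le_lt => dij; apply: no_pair; exists i, j.
have [z [_ near_z]] := box_meets_cluster Q_mono (@unit_box_le N) meets.
have [i [j [iI [jI /Rabs_pos_lt dij]]]] := d_irr z I I0 IT.
have [delta [delta_gt0 d_near]] := (d_cp i j).1 z (Rabs (d i j z) / 2) ltac:(lra).
have [y [yz Qy]] := near_z delta (Rabs (d i j z) / 2) delta_gt0 ltac:(lra).
have := Qy i j iI jI; have := d_near y yz; have := Rabs_triang_inv (d i j z) (d i j y).
by rewrite Rabs_minus_sym; lra.
Qed.

Section Maximum.
Variable N : nat.
Implicit Types (g h : vec N -> R) (x y z : vec N).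

Lemma outside_box_far x r y :
  ~ in_box (fun k => x k - r) (fun k => x k + r) y -> r < vdist y x.
Proof.
move=> /not_all_ex_not [k yk]; apply: Rlt_le_trans (Rabs_coord_le_vdist y x k).
case: (Rlt_le_dec r (Rabs (y k - x k))) => // /Rabs_le_bounds small.
by exfalso; apply: yk => /=; lra.
Qed.

Lemma usc_attains_max psi a b x0 : usc psi -> (exists B, forall y, psi y <= B) ->
  (forall k, a k <= b k) -> (forall y, ~ in_box a b y -> psi y <= psi x0 - 1) ->
  exists z, forall y, psi y <= psi z.
Proof.
move=> psi_usc [B psi_le] a_le_b psi_out.
pose E v := exists y, v = psi y.
have E_bd : bound E by exists B => v [y ->]; exact: psi_le.
have [T [T_ub T_lub]] := completeness E E_bd (ex_intro _ _ (ex_intro _ x0 erefl)).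
have psi_T y : psi y <= T by apply: T_ub; exists y.
pose Q e y := T - e < psi y.
have Q_mono e e' y : e <= e' -> Q e y -> Q e' y by rewrite /Q; lra.
have meets : box_meets Q a b.
  move=> e e_gt0; have e'_gt0 := Rmin_pos e 1 e_gt0 Rlt_0_1.
  have [y Qy] : exists y, T - Rmin e 1 < psi y.
    apply: NNPP => none; have : T <= T - Rmin e 1; last lra.
    by apply: T_lub => v [y ->]; apply: Rnot_lt_le => Qy; apply: none; exists y.
  exists y; split; last by rewrite /Q; have := Rmin_l e 1; lra.
  by apply: NNPP => /psi_out; have := psi_T x0; have := Rmin_r e 1; lra.
have [z [_ near_z]] := box_meets_cluster Q_mono a_le_b meets.
exists z => y; apply: Rle_trans (psi_T y) _; apply: Rnot_lt_le => z_low.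
have [delta [delta_gt0 psi_near]] := psi_usc z ((T - psi z) / 2) ltac:(lra).
have [w [wz Qw]] := near_z delta ((T - psi z) / 2) delta_gt0 ltac:(lra).
by have := psi_near w wz; rewrite /Q in Qw; lra.
Qed.

Lemma usc_penalized_max g h B r x0 :
  usc g -> (forall y, Rabs (g y) <= B) -> continuous_on h -> (forall y, 0 <= h y) ->
  h x0 = 0 -> 0 <= r -> (forall y, r < vdist y x0 -> 2 * B + 1 <= h y) ->
  exists z, forall y, g y - h y <= g z - h z.
Proof.
move=> g_usc g_bd h_cont h_ge0 hx0 r_ge0 h_far.
apply: (usc_attains_max (a := fun k => x0 k - r) (b := fun k => x0 k + r) (x0 := x0)).
- exact: usc_sub_continuous.
- by exists B => y; have := Rabs_le_bounds (g_bd y); have := h_ge0 y; lra.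
- by move=> k; lra.
- move=> y /outside_box_far /h_far; rewrite hx0.
  by have := Rabs_le_bounds (g_bd y); have := Rabs_le_bounds (g_bd x0); lra.
Qed.
End Maximum.

(** * Test functions and subsolutions *)

Section TestFunctions.
Variable N : nat.
Implicit Types (x y z : vec N).

Lemma quad_expand c x0 y z :
  c * dot (vsub y x0) (vsub y x0) - c * dot (vsub z x0) (vsub z x0)
  - dot (fun k => 2 * c * (z k - x0 k)) (vsub y z) = c * (vdist y z * vdist y z).
Proof.
rewrite /vdist vnorm_sqr /dot /vsum /Rminus -!Rsum_mult_l -!Rsum_opp -!big_split.
by apply: eq_bigr => k _; rewrite /vsub /=; ring.
Qed.

Lemma quad_C1 x0 c e0 :
  is_C1 (fun z => c * dot (vsub z x0) (vsub z x0) + e0) (fun z k => 2 * c * (z k - x0 k)).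
Proof.
split=> z eps eps_gt0.
- exists (eps / (Rabs (2 * c) + 1)); split=> [|y yz].
    by apply: Rdiv_lt_0_compat; have := Rabs_pos (2 * c); lra.
  rewrite /vdist (_ : vsub _ _ = fun k => 2 * c * vsub y z k); last first.
    by apply: functional_extensionality => k; rewrite /vsub; ring.
  by rewrite vnorm_scale; apply: mult_lt_of_lt_div => //; [exact: Rabs_pos | exact: vdist_ge0].
- exists (eps / (Rabs c + 1)); split=> [|y yz].
    by apply: Rdiv_lt_0_compat; have := Rabs_pos c; lra.
  rewrite (_ : _ - _ - _ = c * (vdist y z * vdist y z)); last first.
    by rewrite -(quad_expand c x0); ring.
  have yz0 := vdist_ge0 y z.
  rewrite Rabs_mult (Rabs_pos_eq (_ * _)); last exact: Rmult_le_pos.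
  rewrite -Rmult_assoc.
  apply: Rmult_le_compat_r => //; apply/Rlt_le/mult_lt_of_lt_div => //; exact: Rabs_pos.
Qed.

(* equality holds on the sphere [|w - x| = r] *)
Lemma cone_le_paraboloid L r x w : 0 <= L -> 0 < r ->
  L * vdist w x <= L / (2 * r) * dot (vsub w x) (vsub w x) + L * r / 2.
Proof.
move=> L_ge0 r_gt0; rewrite -vnorm_sqr -/(vdist w x).
have : 0 <= L / (2 * r) * ((vdist w x - r) * (vdist w x - r)).
  apply: Rmult_le_pos; last exact: Rle_0_sqr.
  by apply: Rmult_le_pos; [lra | apply/Rlt_le/Rinv_0_lt_compat; lra].
have -> : L / (2 * r) * ((vdist w x - r) * (vdist w x - r))
  = L / (2 * r) * (vdist w x * vdist w x) + L * r / 2 - L * vdist w x by field; lra.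
lra.
Qed.

Lemma usc_touched_near (g : vec N -> R) B x0 eta :
  usc g -> (forall x, Rabs (g x) <= B) -> 0 < eta -> exists z phi Dphi,
    vdist z x0 < eta /\ is_C1 phi Dphi /\ local_max (fun w => g w - phi w) z.
Proof.
move=> g_usc g_bd eta_gt0.
have B_ge0 : 0 <= B by have := g_bd x0; have := Rabs_pos (g x0); lra.
pose K := (2 * B + 1) / (eta * eta).
have K_gt0 : 0 < K by apply: Rdiv_lt_0_compat; nra.
pose phi w := K * dot (vsub w x0) (vsub w x0) + 0.
have phi_dist w : phi w = K * (vdist w x0 * vdist w x0).
  by rewrite /phi /vdist vnorm_sqr Rplus_0_r.
have far y : eta <= vdist y x0 -> 2 * B + 1 <= phi y.
  move=> y_far; rewrite phi_dist (_ : 2 * B + 1 = K * (eta * eta)); last by rewrite /K; field; lra.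
  by apply: Rmult_le_compat_l; [lra | nra].
have [z z_max] : exists z, forall y, g y - phi y <= g z - phi z.
  apply: (usc_penalized_max (B := B) (r := eta) (x0 := x0)) => //.
  - have -> : phi = fun w => K * (vdist w x0 * vdist w x0) by exact: functional_extensionality.
    have dist_cont := lipschitz_continuous (vdist_lipschitz x0).
    exact: continuous_on_mult (continuous_on_const K) (continuous_on_mult dist_cont dist_cont).
  - by move=> y; rewrite phi_dist; apply: Rmult_le_pos; [lra | apply: Rle_0_sqr].
  - by rewrite phi_dist vdist_xx; ring.
  - lra.
  - by move=> y /Rlt_le /far.
exists z, phi, (fun w k => 2 * K * (w k - x0 k)); split; last first.
  by split; [exact: quad_C1 | exists 1; split=> [|w _]; [lra | exact: z_max]].
apply: Rnot_le_lt => /far; have := z_max x0; rewrite phi_dist vdist_xx.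
by have := Rabs_le_bounds (g_bd x0); have := Rabs_le_bounds (g_bd z); lra.
Qed.

End TestFunctions.

Section Subsolutions.
Variables (N m : nat) (F : 'I_m -> vec N -> vec N -> R) (f : 'I_m -> vec N -> R)
  (d : 'I_m -> 'I_m -> vec N -> R).
Implicit Types (u : 'I_m -> vec N -> R) (x y z : vec N).

Definition coupling u i x := \big[Rplus/0]_(j < m) (d i j x * u j x).

Lemma subsol_ineq u i phi Dphi x : visc_subsol F f d u -> is_C1 phi Dphi ->
  local_max (fun y => u i y - phi y) x -> F i x (Dphi x) <= f i x - coupling u i x.
Proof.
move=> [_ [_ sub]] phi_C1 max; have := sub i phi Dphi x phi_C1 max.
by rewrite /Ham /coupling; lra.
Qed.

Lemma subsol_lipschitz u i B L : visc_subsol F f d u -> (forall x, Rabs (u i x) <= B) -> 0 < L ->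
  (forall x p, L <= vnorm p -> f i x - coupling u i x < F i x p) -> lipschitz L (u i).
Proof.
move=> u_sub u_bd L_gt0 coercive.
have B_ge0 : 0 <= B by have := u_bd (fun _ => 0); have := Rabs_pos (u i (fun _ => 0)); lra.
suff half x : forall y, u i y - u i x <= L * vdist y x.
  by move=> x y; apply: Rabs_le; have := half x y; have := half y x; rewrite vdist_sym; lra.
have [z z_max] : exists z, forall y, u i y - L * vdist y x <= u i z - L * vdist z x.
  apply: (usc_penalized_max (B := B) (r := (2 * B + 1) / L) (x0 := x)) => //.
  - exact: u_sub.1.
  - exact: continuous_on_mult (continuous_on_const L) (lipschitz_continuous (vdist_lipschitz x)).
  - by move=> y; apply: Rmult_le_pos; [lra | exact: vdist_ge0].
  - by rewrite vdist_xx Rmult_0_r.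
  - by apply: Rmult_le_pos; [lra | apply/Rlt_le/Rinv_0_lt_compat].
  - move=> y /(Rmult_lt_compat_l L _ _ L_gt0); rewrite /Rdiv -Rmult_assoc (Rmult_comm L).
    by rewrite Rmult_assoc Rinv_r; lra.
(* a maximum point away from [x] would be touched by a paraboloid of slope [L] *)
suff zx : z = x by move=> y; have := z_max y; rewrite zx vdist_xx; lra.
apply: vdist_eq0; apply: NNPP => r_ne0.
pose r := vdist z x.
have r_gt0 : 0 < r by case: (vdist_ge0 z x) => // /esym.
pose c := L / (2 * r).
have touch : local_max (fun w => u i w - (c * dot (vsub w x) (vsub w x) + L * r / 2)) z.
  exists 1; split=> [|w _]; first lra.
  have := z_max w; have := cone_le_paraboloid x w (Rlt_le _ _ L_gt0) r_gt0.
  rewrite /c -(vnorm_sqr (vsub z x)) -/(vdist z x) -/r.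
  by rewrite (_ : L / (2 * r) * (r * r) = L * r / 2); [lra | field; lra].
have := subsol_ineq u_sub (quad_C1 x c (L * r / 2)) touch.
apply/Rlt_not_le/coercive/Req_le; rewrite (_ : (fun k => _) = fun k => 2 * c * vsub z x k) //.
rewrite vnorm_scale -/(vdist z x) -/r Rabs_pos_eq /c; first by field; lra.
by apply: Rmult_le_pos; [lra | apply: Rmult_le_pos; [lra | apply/Rlt_le/Rinv_0_lt_compat; lra]].
Qed.

Lemma subsol_coupling_le u i B : visc_subsol F f d u -> (forall x p, 0 <= F i x p) ->
  (forall j x, Rabs (u j x) <= B) -> (forall j, continuous_on (u j)) ->
  (forall j, continuous_on (d i j)) -> continuous_on (f i) ->
  forall x, coupling u i x <= f i x.
Proof.
move=> u_sub F_ge0 u_bd u_cont d_cont f_cont x.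
pose S y := coupling u i y + - f i y.
have S_cont : continuous_on S.
  apply: continuous_on_add (continuous_on_opp f_cont).
  by apply: continuous_on_sum => j; apply: continuous_on_mult.
apply: Rnot_lt_le => Sx_pos; have {}Sx_pos : 0 < S x by rewrite /S; lra.
have [delta [delta_gt0 S_near]] := S_cont x (S x) Sx_pos.
have [z [phi [Dphi [zx [phi_C1 max]]]]] := usc_touched_near x (u_sub.1 i) (u_bd i) delta_gt0.
have := subsol_ineq u_sub phi_C1 max; have := F_ge0 z (Dphi z).
by have := S_near z zx; have := Rle_abs (S x - S z); rewrite Rabs_minus_sym /S; lra.
Qed.
End Subsolutions.

(** * Irreducible matrices *)

Lemma exists_argmax (T : finType) (t0 : T) (v : T -> R) : exists i, forall j, v j <= v i.
Proof.
suff [i vi] : exists i, forall j, j \in enum T -> v j <= v i.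
  by exists i => j; apply: vi; rewrite mem_enum.
elim: (enum T) => [|t s [i vi]]; first by exists t0.
case: (Rle_lt_dec (v t) (v i)) => vt; [exists i | exists t] => j; rewrite inE => /orP [/eqP ->|js];
  try lra; have := vi j js; lra.
Qed.

Section IrreducibleMatrix.
Variables (m : nat) (D : 'I_m -> 'I_m -> R) (A delta C : R).
Hypotheses (A_ge0 : 0 <= A) (delta_gt0 : 0 < delta) (C_ge0 : 0 <= C).
Hypothesis D_offdiag : forall i j, i != j -> D i j <= 0.
Hypothesis D_bd : forall i j, Rabs (D i j) <= A.

Lemma row_centered (v : 'I_m -> R) i : \big[Rplus/0]_(j < m) D i j = 0 ->
  \big[Rplus/0]_(j < m) (D i j * v j) = \big[Rplus/0]_(j < m) (D i j * (v j - v i)).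
Proof.
move=> rowsum0.
transitivity (\big[Rplus/0]_(j < m) (D i j * v j) + - (v i * \big[Rplus/0]_(j < m) D i j)).
  by rewrite rowsum0; ring.
by rewrite -Rsum_mult_l -Rsum_opp -big_split; apply: eq_bigr => j _ /=; ring.
Qed.

Lemma row_centered_lb (v : 'I_m -> R) i c (P : pred 'I_m) : 0 <= c ->
  (forall j, v j - v i <= c) ->
  - (INR m * (A * c)) <= \big[Rplus/0]_(j < m | P j) (D i j * (v j - v i)).
Proof.
move=> c_ge0 v_le; apply: Rsum_ge_card => [|j]; first exact: Rmult_le_pos.
have := v_le j; have := D_bd i j; have := Rle_abs (- D i j); rewrite Rabs_Ropp.
case: (eqVneq i j) => [->|ij]; first by rewrite Rminus_diag Rmult_0_r; nra.
by have := D_offdiag ij; nra.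
Qed.

Fixpoint osc_const (n : nat) : R :=
  if n is n'.+1 then osc_const n' + (C + INR m * A * osc_const n') / delta else 0.

Lemma osc_const_step_ge0 n : 0 <= osc_const n -> 0 <= (C + INR m * A * osc_const n) / delta.
Proof.
move=> c_ge0; apply: Rmult_le_pos; last by apply/Rlt_le/Rinv_0_lt_compat.
by have := Rmult_le_pos _ _ (Rmult_le_pos _ _ (pos_INR m) A_ge0) c_ge0; lra.
Qed.

Lemma osc_const_ge0 n : 0 <= osc_const n.
Proof. by elim: n => [|n IH] /=; [lra | have := osc_const_step_ge0 IH; lra]. Qed.

Lemma osc_const_le_succ n : osc_const n <= osc_const n.+1.
Proof. by rewrite /=; have := osc_const_step_ge0 (osc_const_ge0 n); lra. Qed.

Hypothesis D_rowsum0 : forall i, \big[Rplus/0]_(j < m) D i j = 0.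
Hypothesis D_gap : irreducible_gap delta D.
Variable v : 'I_m -> R.
Hypothesis Dv_le : forall i, \big[Rplus/0]_(j < m) (D i j * v j) <= C.

(* an entry of size at least [delta] from [I] to its complement pulls some [v j1],
   [j1] outside [I], up towards the values on [I] *)
Lemma irreducible_spread_step V c (I : {set 'I_m}) : 0 <= c -> (forall j, v j <= V) ->
  I != set0 -> I != setT -> (forall j, j \in I -> V - c <= v j) ->
  exists j1, j1 \notin I /\ V - (c + (C + INR m * A * c) / delta) <= v j1.
Proof.
move=> c_ge0 v_le I0 IT vI.
have [i1 [j1 [i1I [j1I Dgap]]]] := D_gap I0 IT.
have i1j1 : i1 != j1 by apply: contraNneq j1I => <-.
have D_neg : D i1 j1 <= - delta.
  by move: Dgap; rewrite Rabs_left1; [lra | exact: D_offdiag].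
have row := Dv_le i1; rewrite row_centered // (bigD1 j1) //= in row.
have v_spread j : v j - v i1 <= c by have := v_le j; have := vI i1 i1I; lra.
move: row; set rest := \big[Rplus/0]_(i < m | _) _ => row.
have : - (INR m * (A * c)) <= rest by apply: row_centered_lb.
move=> rest_lb; exists j1; split=> //.
have mAc := Rmult_le_pos _ _ (Rmult_le_pos _ _ (pos_INR m) A_ge0) c_ge0.
have edge : D i1 j1 * (v j1 - v i1) <= C + INR m * A * c by lra.
have gap : v i1 - v j1 <= (C + INR m * A * c) / delta.
  apply: (Rmult_le_reg_l delta) => //.
  rewrite (_ : delta * (_ / delta) = C + INR m * A * c); last by field; lra.
  case: (Rle_lt_dec (v i1 - v j1) 0) => sign; first nra.
  by have := Rmult_le_compat_r _ _ _ (Rlt_le _ _ sign) D_neg; lra.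
by have := vI i1 i1I; lra.
Qed.

Lemma irreducible_osc_bound i k : v k - v i <= osc_const m.
Proof.
have [i0 v_le] := exists_argmax i v; pose V := v i0.
(* grow a set of indices on which [v] is close to its maximum *)
have grow (n : nat) : exists I : {set 'I_m}, ((n < #|I|)%nat \/ I = setT) /\
    forall j, j \in I -> V - osc_const n <= v j.
  elim: n => [|n [I [I_big vI]]].
    by exists [set i0]; split=> [|j /set1P ->]; [left; rewrite cards1 | rewrite /= /V; lra].
  have vI' j : j \in I -> V - osc_const n.+1 <= v j.
    by move=> /vI; have := osc_const_le_succ n; lra.
  have [IT|IT] := eqVneq I setT; first by exists I; split=> [|j /vI']; [right | ].
  have I_card : (n < #|I|)%nat by case: I_big => // /eqP; rewrite (negbTE IT).
  have I0 : I != set0 by rewrite -card_gt0; apply: leq_ltn_trans I_card.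
  have [j1 [j1I vj1]] := irreducible_spread_step (osc_const_ge0 n) v_le I0 IT vI.
  exists (j1 |: I); split=> [|j]; first by left; rewrite cardsU1 j1I.
  by rewrite in_setU1 => /orP [/eqP ->|/vI'].
have [I [I_big vI]] := grow m.
have IT : I = setT.
  case: I_big => // I_big; have := max_card (mem I); rewrite card_ord => /(leq_trans I_big).
  by rewrite ltnn.
by have := vI i; rewrite IT in_setT /V => /(_ isT); have := v_le k; lra.
Qed.
End IrreducibleMatrix.

(** * Lipschitz bounds for the system *)

Section System.
Variables (N m : nat) (F : 'I_m -> vec N -> vec N -> R) (f : 'I_m -> vec N -> R)
  (d : 'I_m -> 'I_m -> vec N -> R).
Hypotheses (hH0 : H0 F f) (hH1 : H1 F) (hH3 : H3 d).
Implicit Type u : 'I_m -> vec N -> R.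

Lemma f_upper_bound : exists Cf, 0 <= Cf /\ forall i x, f i x <= Cf.
Proof.
have [B fB] : exists B, forall i x, Rabs (f i x) <= B.
  apply: (finite_sup_bound (P := fun i B => forall x, Rabs (f i x) <= B)) => [i B B' BB' fB x|i].
    by have := fB x; lra.
  by have [f_cont [f_per _]] := hH0 i; apply: continuous_periodic_bounded.
exists (Rmax 0 B); split=> [|i x]; first exact: Rmax_l.
by have := Rabs_le_bounds (fB i x); have := Rmax_r 0 B; lra.
Qed.

Lemma d_bound : exists A, 0 <= A /\ forall i j x, Rabs (d i j x) <= A.
Proof.
have [B dB] : exists B, forall ij : 'I_m * 'I_m, forall x, Rabs (d ij.1 ij.2 x) <= B.
  apply: finite_sup_bound => [ij B B' BB' dB x|[i j]]; first by have := dB x; lra.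
  by have [d_cont d_per] := hH3.1 i j; apply: continuous_periodic_bounded.
exists (Rmax 0 B); split=> [|i j x]; first exact: Rmax_l.
by have /= := dB (i, j) x; have := Rmax_r 0 B; lra.
Qed.

Lemma F_ge0 i x p : 0 <= F i x p.
Proof. by have [_ [_ [F0 F00]]] := hH1 i; rewrite -(F00 x); apply: F0. Qed.

Lemma F_uniformly_coercive M : exists L, 0 < L /\ forall i x p, L <= vnorm p -> M <= F i x p.
Proof.
have [L FL] : exists L, forall i x p, L <= vnorm p -> M <= F i x p.
  apply: (finite_sup_bound (P := fun i L => forall x p, L <= vnorm p -> M <= F i x p)).
    by move=> i L L' LL' FL x p Lp; apply: FL; lra.
  by move=> i; have [_ [coercive _]] := hH1 i; apply: coercive.
exists (Rmax 1 L); split=> [|i x p Lp]; first by have := Rmax_l 1 L; lra.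
by apply: FL; have := Rmax_r 1 L; lra.
Qed.

Lemma lipschitz_of_coupling_lb Cf : (forall i x, f i x <= Cf) -> forall G, exists L, 0 <= L /\
  forall u B, visc_subsol F f d u -> (forall i x, Rabs (u i x) <= B) ->
    (forall i x, - G <= coupling d u i x) -> forall i, lipschitz L (u i).
Proof.
move=> f_le G; have [L [L_gt0 FL]] := F_uniformly_coercive (Cf + G + 1).
exists L; split=> [|u B u_sub u_bd coupling_lb i]; first lra.
apply: (subsol_lipschitz u_sub (u_bd i) L_gt0) => x p Lp.
by have := FL i x p Lp; have := f_le i x; have := coupling_lb i x; lra.
Qed.

Lemma coupling_lb_bounded A M u i x : 0 <= A -> (forall i j x, Rabs (d i j x) <= A) ->
  0 <= M -> (forall j x, Rabs (u j x) <= M) -> - (INR m * (A * M)) <= coupling d u i x.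
Proof.
move=> A_ge0 d_le M_ge0 u_le; apply: Rsum_ge_card => [|j]; first exact: Rmult_le_pos.
have := Rmult_le_compat _ _ _ _ (Rabs_pos _) (Rabs_pos _) (d_le i j x) (u_le j x).
by rewrite -Rabs_mult -Rabs_Ropp; have := Rle_abs (- (d i j x * u j x)); lra.
Qed.

Lemma coupling_lb_osc A K u i x : 0 <= A -> (forall i j x, Rabs (d i j x) <= A) ->
  (forall i x, \big[Rplus/0]_(j < m) d i j x = 0) ->
  0 <= K -> (forall j, u j x - u i x <= K) -> - (INR m * (A * K)) <= coupling d u i x.
Proof.
move=> A_ge0 d_le rowsum0 K_ge0 osc.
rewrite /coupling (row_centered (D := fun i j => d i j x) (fun j => u j x) (rowsum0 i x)).
by apply: (row_centered_lb (D := fun i j => d i j x)) => // i' j; exact: hH3.2.2.1.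
Qed.

Lemma subsol_osc_bound Cf A delta u B :
  0 <= Cf -> (forall i x, f i x <= Cf) -> 0 <= A -> (forall i j x, Rabs (d i j x) <= A) ->
  0 < delta -> (forall x, irreducible_gap delta (fun i j => d i j x)) ->
  (forall i x, \big[Rplus/0]_(j < m) d i j x = 0) ->
  visc_subsol F f d u -> (forall i x, Rabs (u i x) <= B) -> (forall i, continuous_on (u i)) ->
  forall x i k, u k x - u i x <= osc_const m A delta Cf m.
Proof.
move=> Cf_ge0 f_le A_ge0 d_le delta_gt0 gap rowsum0 u_sub u_bd u_cont x.
apply: (irreducible_osc_bound (D := fun i j => d i j x)) => // [i j|i].
  exact: hH3.2.2.1.
apply: Rle_trans (f_le i x).
apply: (subsol_coupling_le u_sub (F_ge0 i) u_bd u_cont) => [j|]; first exact: (hH3.1 i j).1.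
exact: (hH0 i).1.
Qed.

End System.

Theorem lemma3p4 (N m : nat) (F : 'I_m -> vec N -> vec N -> R)
  (f : 'I_m -> vec N -> R) (d : 'I_m -> 'I_m -> vec N -> R)
  (hH0 : H0 F f) (hH1 : H1 F) (hH2 : H2 f) (hH3 : H3 d) :
  (forall M : R, exists L : R, 0 <= L /\
     forall u : 'I_m -> vec N -> R, visc_subsol F f d u ->
       (forall i x, Rabs (u i x) <= M) ->
       forall i, lipschitz L (u i)) /\
  ((forall i x, \big[Rplus/0]_(j < m) d i j x = 0) ->
   (forall x, irreducible_at d x) ->
   exists L : R, 0 <= L /\
     forall u : 'I_m -> vec N -> R, visc_subsol F f d u ->
       (exists B, forall i x, Rabs (u i x) <= B) ->
       forall i, lipschitz L (u i)).
Proof.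
have [Cf [Cf_ge0 f_le]] := f_upper_bound hH0.
have [A [A_ge0 d_le]] := d_bound hH3.
have lip := lipschitz_of_coupling_lb d hH1 f_le.
have bounded_lip M : exists L, 0 <= L /\ forall u, visc_subsol F f d u ->
    (forall i x, Rabs (u i x) <= M) -> forall i, lipschitz L (u i).
  have [L [L_ge0 uL]] := lip (INR m * (A * Rmax 0 M)).
  exists L; split=> // u u_sub u_bd; have u_bd' i x := Rle_trans _ _ _ (u_bd i x) (Rmax_r 0 M).
  apply: (uL _ _ u_sub u_bd') => i x.
  exact: (coupling_lb_bounded _ _ A_ge0 d_le (Rmax_l 0 M) u_bd').
split=> // rowsum0 irr.
have [delta [delta_gt0 gap]] := uniform_irreducible hH3.1 irr.
pose K := osc_const m A delta Cf m.
have [L [L_ge0 uL]] := lip (INR m * (A * K)).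
exists L; split=> // u u_sub [B u_bd].
have [L1 [_ uL1]] := bounded_lip B.
have u_cont i := lipschitz_continuous (uL1 u u_sub u_bd i).
have osc := subsol_osc_bound hH0 hH1 hH3 Cf_ge0 f_le A_ge0 d_le delta_gt0 gap rowsum0
  u_sub u_bd u_cont.
apply: uL u_sub u_bd _ => i x.
by apply: coupling_lb_osc => //; exact: osc_const_ge0.
Qed.
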